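(* Let $b_i>0$ ($i\ge0$), $a_i>0$ ($i\ge1$) and $c_i\le0$ ($i\ge0$) be real numbers. Put $\mu_0=1$, $\mu_i=\frac{b_0\cdots b_{i-1}}{a_1\cdots a_i}$ ($i\ge1$). Define $$\tilde q_n^{(k)}=\begin{cases}-c_n,&0\le k\le n-2,\\ a_n-c_n,&k=n-1,\end{cases}\qquad \widetilde F_i^{(i)}=1,\quad \widetilde F_n^{(i)}=\frac1{b_n}\sum_{k=i}^{n-1}\tilde q_n^{(k)}\widetilde F_k^{(i)}\ (n>i\ge0),$$ $$h_n=1-\sum_{0\le k\le n-1}\ \sum_{0\le j\le k}\widetilde F_k^{(j)}\frac{c_j}{b_j},\qquad n\ge0,$$ and $$\lambda_0=\inf\Big\{\sum_{k\ge0}\mu_k\big[b_k(f_{k+1}-f_k)^2-c_kf_k^2\big]:\ \sum_{k\ge0}\mu_kf_k^2=1,\ f\text{ finitely supported on }\{0,1,2,\dots\}\Big\}.$$ Let $$\tilde\delta=\sup_{n\ge0}\sum_{j=0}^n\mu_jh_j^2\sum_{k\ge n}\frac1{h_kh_{k+1}\mu_kb_k}.$$ Then $\tilde\delta\le\lambda_0^{-1}\le4\tilde\delta$ (with $1/0=\infty$). In particular, $\lambda_0>0$ if and only if $\tilde\delta<\infty$. *)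

From Stdlib Require Import Reals Lra Arith ClassicalEpsilon.
Open Scope R_scope.

Inductive ER : Type := Fin (x : R) | PInf.

Definition ER_le (x y : ER) : Prop :=
  match x, y with
  | Fin u, Fin v => u <= v
  | _, PInf => True
  | PInf, Fin _ => False
  end.

Definition ER_scale (r : R) (x : ER) : ER :=
  match x with Fin u => Fin (r * u) | PInf => PInf end.

Definition ER_inv (x : R) : ER := if Req_EM_T x 0 then PInf else Fin (/ x).

Definition ER_is_lub (P : ER -> Prop) (s : ER) : Prop :=
  (forall x, P x -> ER_le x s) /\
  (forall u, (forall x, P x -> ER_le x u) -> ER_le s u).

(* supremum in R ∪ {+oo} (chosen by Hilbert's epsilon; it is the l.u.b.
   whenever one exists, which is the case for every nonempty set) *)
Definition ER_sup (P : ER -> Prop) : ER := epsilon (inhabits PInf) (ER_is_lub P).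

Definition R_is_glb (P : R -> Prop) (l : R) : Prop :=
  (forall x, P x -> l <= x) /\ (forall m, (forall x, P x -> m <= x) -> m <= l).

Definition R_inf (P : R -> Prop) : R := epsilon (inhabits 0) (R_is_glb P).

Fixpoint sumR (f : nat -> R) (n : nat) : R :=
  match n with O => 0 | S m => sumR f m + f m end.

(* sum over k >= n of nonnegative terms t k, valued in [0, +oo] :
   the supremum of the partial sums t n + ... + t (n+N) *)
Definition tail_sum (t : nat -> R) (n : nat) : ER :=
  ER_sup (fun x => exists N : nat, x = Fin (sumR (fun j => t (n + j)%nat) (S N))).

Section Paper.
Variables (a b c : nat -> R).

Fixpoint mu (i : nat) : R :=
  match i with O => 1 | S j => mu j * (b j / a (S j)) end.

Definition qt (n k : nat) : R :=
  if Nat.eqb k (n - 1) then a n - c n else - c n.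

(* Fseq i m j = tilde F_{i+j}^{(i)} for j <= m *)
Fixpoint Fseq (i m : nat) : nat -> R :=
  match m with
  | O => fun j => if Nat.eqb j 0 then 1 else 0
  | S m' => fun j =>
      if Nat.leb j m' then Fseq i m' j
      else / b (i + S m')%nat *
           sumR (fun t => qt (i + S m') (i + t) * Fseq i m' t) (S m')
  end.

(* tilde F_n^{(i)} for n >= i (set to 0 for n < i, never used) *)
Definition Ft (i n : nat) : R :=
  if Nat.ltb n i then 0 else Fseq i (n - i) (n - i).

Definition h (n : nat) : R :=
  1 - sumR (fun k => sumR (fun j => Ft j k * c j / b j) (S k)) n.

Definition Sdelta (n : nat) : ER :=
  ER_scale (sumR (fun j => mu j * (h j)^2) (S n))
           (tail_sum (fun k => / (h k * h (S k) * mu k * b k)) n).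

Definition delta_tilde : ER := ER_sup (fun x => exists n : nat, x = Sdelta n).

(* values of the Dirichlet form on finitely supported f normalised in L^2(mu)
   (f k = 0 for k >= N, so the series are the finite sums over k < N) *)
Definition Dvalues (x : R) : Prop :=
  exists (f : nat -> R) (N : nat),
    (forall k, (N <= k)%nat -> f k = 0) /\
    sumR (fun k => mu k * (f k)^2) N = 1 /\
    x = sumR (fun k => mu k * (b k * (f (S k) - f k)^2 - c k * (f k)^2)) N.

Definition lambda0 : R := R_inf Dvalues.

End Paper.

From Stdlib Require Import Reals Lra Lia Classical ClassicalEpsilon.
Open Scope R_scope.

(* The function [h] is harmonic, [b n (h (n+1) - h n) = a n (h n - h (n-1)) - c n h n],
   and [h >= 1].  Writing [f = h g] (ground state transform) removes the killing term:
   for finitely supported [f] the Dirichlet form becomes [sum_k (g k - g (k+1))^2 / w k]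
   with [w k = 1 / (h k h (k+1) mu k b k)], and [sum_k mu k f k^2 = sum_k mu k h k^2 g k^2].
   Hence [lambda0] is the best constant of a weighted discrete Hardy inequality, and
   [delta_tilde] is Muckenhoupt's quantity [sup_n (sum_{j<=n} mu j h j^2) (sum_{k>=n} w k)].
   Muckenhoupt's bound gives [1/lambda0 <= 4 delta_tilde]; testing [lambda0] on [g] equal
   to the tail sums of [w], frozen below [n], gives [delta_tilde <= 1/lambda0]. *)

Lemma sumR_S f n : sumR f (S n) = sumR f n + f n.
Proof. reflexivity. Qed.

Lemma sumR_ext f g n : (forall k, (k < n)%nat -> f k = g k) -> sumR f n = sumR g n.
Proof.
  induction n as [|n IH]; intros H; simpl; auto.
  rewrite IH by (intros; apply H; lia). rewrite H by lia. reflexivity.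
Qed.

Lemma sumR_plus f g n : sumR (fun k => f k + g k) n = sumR f n + sumR g n.
Proof. induction n as [|n IH]; simpl; [lra|]. rewrite IH; lra. Qed.

Lemma sumR_scal r f n : sumR (fun k => r * f k) n = r * sumR f n.
Proof. induction n as [|n IH]; simpl; [lra|]. rewrite IH; lra. Qed.

Lemma sumR_le f g n : (forall k, (k < n)%nat -> f k <= g k) -> sumR f n <= sumR g n.
Proof.
  induction n as [|n IH]; intros H; simpl; [lra|].
  assert (f n <= g n) by (apply H; lia).
  assert (sumR f n <= sumR g n) by (apply IH; intros; apply H; lia). lra.
Qed.

Lemma sumR_zero f n : (forall k, (k < n)%nat -> f k = 0) -> sumR f n = 0.
Proof.
  intros H. rewrite (sumR_ext f (fun _ => 0)) by auto. clear H; induction n; simpl; lra.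
Qed.

Lemma sumR_nonneg f n : (forall k, (k < n)%nat -> 0 <= f k) -> 0 <= sumR f n.
Proof.
  intros H. apply Rle_trans with (sumR (fun _ => 0) n).
  - rewrite sumR_zero; auto; lra.
  - now apply sumR_le.
Qed.

Lemma sumR_split f n m : sumR f (n + m) = sumR f n + sumR (fun i => f (n + i)%nat) m.
Proof.
  induction m as [|m IH]; simpl; [rewrite Nat.add_0_r; lra|].
  rewrite Nat.add_succ_r; simpl; rewrite IH; lra.
Qed.

Lemma sumR_swap (F : nat -> nat -> R) n m :
  sumR (fun i => sumR (fun j => F i j) m) n = sumR (fun j => sumR (fun i => F i j) n) m.
Proof.
  induction n as [|n IH]; simpl.
  - symmetry; apply sumR_zero; auto.
  - rewrite IH, <- sumR_plus. reflexivity.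
Qed.

Lemma sumR_telescope x n : sumR (fun j => x (S j) - x j) n = x n - x O.
Proof. induction n as [|n IH]; simpl; [|rewrite IH]; lra. Qed.

(* [x j + ... + x (N-1)], empty when [N <= j] *)
Definition sumR_range (x : nat -> R) (j N : nat) : R := sumR (fun i => x (j + i)%nat) (N - j).

Lemma sumR_range_shift x n k : sumR_range x n (n + k) = sumR (fun i => x (n + i)%nat) k.
Proof. unfold sumR_range. now replace (n + k - n)%nat with k by lia. Qed.

Lemma sumR_range_step x N j : (j < N)%nat -> sumR_range x j N = x j + sumR_range x (S j) N.
Proof.
  intros H. unfold sumR_range. replace (N - j)%nat with (1 + (N - S j))%nat by lia.
  rewrite sumR_split. simpl. rewrite Nat.add_0_r. f_equal; [lra|].
  apply sumR_ext; intros. f_equal; lia.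
Qed.

Lemma sumR_range_end x N j : (N <= j)%nat -> sumR_range x j N = 0.
Proof. intros H. unfold sumR_range. now replace (N - j)%nat with O by lia. Qed.

Lemma sumR_range_ext x y N j :
  (forall k, (j <= k < N)%nat -> x k = y k) -> sumR_range x j N = sumR_range y j N.
Proof. intros H. apply sumR_ext. intros. apply H. lia. Qed.

Lemma sumR_range_le x y N j :
  (forall k, (j <= k < N)%nat -> x k <= y k) -> sumR_range x j N <= sumR_range y j N.
Proof. intros H. apply sumR_le. intros. apply H. lia. Qed.

Lemma sumR_range_nonneg x N j :
  (forall k, (j <= k < N)%nat -> 0 <= x k) -> 0 <= sumR_range x j N.
Proof. intros H. apply sumR_nonneg. intros. apply H. lia. Qed.

Lemma sumR_range_scal r x N j : sumR_range (fun k => r * x k) j N = r * sumR_range x j N.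
Proof. apply sumR_scal. Qed.

Lemma sumR_range_telescope x N j :
  (j <= N)%nat -> sumR_range (fun k => x k - x (S k)) j N = x j - x N.
Proof.
  intros H. remember (N - j)%nat as r eqn:Hr. revert j H Hr.
  induction r as [|r IH]; intros j H Hr.
  - rewrite sumR_range_end by lia. replace j with N by lia. lra.
  - rewrite sumR_range_step, IH by lia. lra.
Qed.

Lemma sumR_abel (a x : nat -> R) N :
  sumR (fun j => a j * sumR_range x j N) N = sumR (fun k => x k * sumR a (S k)) N.
Proof.
  assert (G : forall n, (n <= N)%nat -> sumR (fun j => a j * sumR_range x j N) n =
     sumR (fun k => x k * sumR a (S k)) n + sumR a n * sumR_range x n N).
  { induction n as [|n IH]; intros Hn; simpl; [lra|].
    rewrite IH, (sumR_range_step x N n) by lia. simpl. ring. }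
  rewrite G, sumR_range_end by lia. ring.
Qed.

Lemma sumR_drop_zeros f i n : (i <= n)%nat -> (forall k, (k < i)%nat -> f k = 0) ->
  sumR f n = sumR (fun t => f (i + t)%nat) (n - i).
Proof.
  intros Hi H. replace n with (i + (n - i))%nat at 1 by lia.
  rewrite sumR_split, sumR_zero by auto. lra.
Qed.

Lemma sumR_truncate f m n : (m <= n)%nat -> (forall k, (m <= k < n)%nat -> f k = 0) ->
  sumR f n = sumR f m.
Proof.
  intros Hm H. replace n with (m + (n - m))%nat by lia.
  rewrite sumR_split, (sumR_zero _ (n - m)) by (intros; apply H; lia). lra.
Qed.

Lemma two_mul_le_add_of_sqr_le u v z : 0 <= u -> 0 <= v -> z * z <= u * v -> 2 * z <= u + v.
Proof. intros Hu Hv Hz. pose proof (pow2_ge_0 (u - v)). nra. Qed.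

Lemma sqr_sub_sqr_le A B : 0 <= B <= A -> A * A - B * B <= 2 * A * (A - B).
Proof. intros H. nra. Qed.

Lemma cauchy_schwarz_step A X P d p : 0 <= X -> 0 <= P -> 0 < p -> A ^ 2 <= X * P ->
  (A + d) ^ 2 <= (d ^ 2 / p + X) * (p + P).
Proof.
  intros HX HP Hp H.
  assert (2 * (A * d) <= d ^ 2 * P / p + X * p).
  { assert (0 <= d ^ 2) by apply pow2_ge_0.
    assert (0 < / p) by (apply Rinv_0_lt_compat; lra).
    apply two_mul_le_add_of_sqr_le.
    - unfold Rdiv. apply Rmult_le_pos; [apply Rmult_le_pos|]; lra.
    - apply Rmult_le_pos; lra.
    - replace (d ^ 2 * P / p * (X * p)) with (d ^ 2 * (X * P)) by (field; lra).
      replace (A * d * (A * d)) with (d ^ 2 * A ^ 2) by ring.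
      apply Rmult_le_compat_l; lra. }
  replace ((d ^ 2 / p + X) * (p + P)) with (d ^ 2 + d ^ 2 * P / p + X * p + X * P)
    by (field; lra).
  nra.
Qed.

Lemma sqr_le_sumR_range_CS (g p : nat -> R) N j :
  (forall k, (k < N)%nat -> 0 < p k) -> g N = 0 -> (j <= N)%nat ->
  g j ^ 2 <= sumR_range (fun k => (g k - g (S k)) ^ 2 / p k) j N * sumR_range p j N.
Proof.
  intros Hp HgN. remember (N - j)%nat as r eqn:Hr. revert j Hr.
  induction r as [|r IH]; intros j Hr Hj.
  - replace j with N by lia. rewrite HgN, !sumR_range_end by lia. lra.
  - rewrite !(sumR_range_step _ N j) by lia.
    replace (g j ^ 2) with ((g (S j) + (g j - g (S j))) ^ 2) by (f_equal; ring).
    apply cauchy_schwarz_step; [| |apply Hp; lia|apply IH; lia].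
    + apply sumR_range_nonneg. intros k Hk.
      pose proof (Hp k ltac:(lia)). apply Rmult_le_pos; [apply pow2_ge_0|].
      left; apply Rinv_0_lt_compat; lra.
    + apply sumR_range_nonneg. intros k Hk. left; apply Hp; lia.
Qed.

Section Hardy.

Variables (N : nat) (m w : nat -> R) (delta : R).
Hypotheses (hm : forall j, 0 < m j) (hw : forall k, 0 < w k)
  (hdelta : forall n, (n < N)%nat -> sumR m (S n) * sumR_range w n N <= delta).

(* Muckenhoupt's argument: Cauchy-Schwarz with the weights [w k / sqrt_tail k], whose
   tail sums are at most [2 * sqrt_tail j] because
   [w k = sqrt_tail k ^ 2 - sqrt_tail (S k) ^ 2]. *)
Let sqrt_tail j := sqrt (sumR_range w j N).

Lemma tail_nonneg j : 0 <= sumR_range w j N.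
Proof. apply sumR_range_nonneg. intros k _. left; apply hw. Qed.

Lemma sqrt_tail_sqr j : sqrt_tail j * sqrt_tail j = sumR_range w j N.
Proof. apply sqrt_sqrt, tail_nonneg. Qed.

Lemma sqrt_tail_pos j : (j < N)%nat -> 0 < sqrt_tail j.
Proof.
  intros Hj. apply sqrt_lt_R0. rewrite sumR_range_step by auto.
  pose proof (hw j). pose proof (tail_nonneg (S j)). lra.
Qed.

Lemma sumR_range_w_div_sqrt_tail_le j : (j <= N)%nat ->
  sumR_range (fun k => w k / sqrt_tail k) j N <= 2 * sqrt_tail j.
Proof.
  intros Hj.
  apply Rle_trans with (sumR_range (fun k => 2 * (sqrt_tail k - sqrt_tail (S k))) j N).
  - apply sumR_range_le. intros k Hk. pose proof (sqrt_tail_pos k ltac:(lia)).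
    assert (Hw : w k = sqrt_tail k * sqrt_tail k - sqrt_tail (S k) * sqrt_tail (S k))
      by (rewrite !sqrt_tail_sqr, (sumR_range_step w N k) by lia; ring).
    assert (sqrt_tail (S k) <= sqrt_tail k).
    { apply sqrt_le_1_alt. rewrite (sumR_range_step w N k) by lia. pose proof (hw k). lra. }
    apply (Rmult_le_reg_r (sqrt_tail k)); auto.
    replace (w k / sqrt_tail k * sqrt_tail k) with (w k) by (field; lra). rewrite Hw.
    assert (0 <= sqrt_tail (S k)) by apply sqrt_pos.
    pose proof (sqr_sub_sqr_le (sqrt_tail k) (sqrt_tail (S k))). lra.
  - rewrite sumR_range_scal, sumR_range_telescope by auto.
    unfold sqrt_tail at 2. rewrite sumR_range_end, sqrt_0 by lia. lra.
Qed.

Lemma sqr_le_sqrt_tail_mul_sumR_range (g : nat -> R) j : g N = 0 -> (j < N)%nat ->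
  g j ^ 2 <= 2 * sqrt_tail j *
    sumR_range (fun k => (g k - g (S k)) ^ 2 / w k * sqrt_tail k) j N.
Proof.
  intros HgN Hj.
  assert (Hpos : forall k, (k < N)%nat -> 0 < w k / sqrt_tail k)
    by (intros k Hk; apply Rdiv_lt_0_compat; [apply hw|apply sqrt_tail_pos; auto]).
  assert (HE : sumR_range (fun k => (g k - g (S k)) ^ 2 / (w k / sqrt_tail k)) j N
             = sumR_range (fun k => (g k - g (S k)) ^ 2 / w k * sqrt_tail k) j N).
  { apply sumR_range_ext. intros k Hk. pose proof (sqrt_tail_pos k ltac:(lia)).
    pose proof (hw k). field. lra. }
  assert (HE0 : 0 <= sumR_range (fun k => (g k - g (S k)) ^ 2 / w k * sqrt_tail k) j N).
  { apply sumR_range_nonneg. intros k Hk. pose proof (sqrt_tail_pos k ltac:(lia)).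
    pose proof (hw k). apply Rmult_le_pos; [|lra]. apply Rmult_le_pos; [apply pow2_ge_0|].
    left; apply Rinv_0_lt_compat; lra. }
  eapply Rle_trans; [apply (sqr_le_sumR_range_CS g _ N j Hpos HgN); lia|].
  rewrite HE, Rmult_comm. apply Rmult_le_compat_r; auto.
  apply sumR_range_w_div_sqrt_tail_le. lia.
Qed.

Lemma sumR_m_sqrt_tail_le n : (n <= N)%nat ->
  sumR (fun j => m j * sqrt_tail j) n <= 2 * sqrt delta * sqrt (sumR m n).
Proof.
  intros Hn. set (A j := sqrt (sumR m j)).
  apply Rle_trans with (sumR (fun j => 2 * sqrt delta * (A (S j) - A j)) n).
  - apply sumR_le. intros j Hj.
    assert (HM : 0 <= sumR m j) by (apply sumR_nonneg; intros; left; auto).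
    assert (HA : A (S j) * A (S j) = sumR m j + m j)
      by (apply sqrt_sqrt; pose proof (hm j); lra).
    assert (HB : A j * A j = sumR m j) by (apply sqrt_sqrt; auto).
    assert (0 <= A j) by apply sqrt_pos.
    assert (A j <= A (S j)) by (apply sqrt_le_1_alt; simpl; pose proof (hm j); lra).
    assert (HAs : A (S j) * sqrt_tail j <= sqrt delta).
    { unfold A, sqrt_tail. rewrite <- sqrt_mult_alt by (apply sumR_nonneg; intros; left; auto).
      apply sqrt_le_1_alt, hdelta. lia. }
    assert (0 <= sqrt_tail j) by apply sqrt_pos.
    pose proof (sqr_sub_sqr_le (A (S j)) (A j)).
    replace (m j) with (A (S j) * A (S j) - A j * A j) by lra. nra.
  - rewrite sumR_scal, sumR_telescope. unfold A. simpl. rewrite sqrt_0. lra.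
Qed.

Lemma sqrt_tail_mul_sumR_m_sqrt_tail_le k : (k < N)%nat ->
  sqrt_tail k * sumR (fun j => m j * sqrt_tail j) (S k) <= 2 * delta.
Proof.
  intros Hk.
  assert (Hdelta : 0 <= delta).
  { eapply Rle_trans; [|apply (hdelta k Hk)].
    apply Rmult_le_pos; [apply sumR_nonneg; intros; left; auto|apply tail_nonneg]. }
  pose proof (sumR_m_sqrt_tail_le (S k) Hk). pose proof (sqrt_tail_pos k Hk).
  assert (sqrt (sumR m (S k)) * sqrt_tail k <= sqrt delta).
  { unfold sqrt_tail. rewrite <- sqrt_mult_alt by (apply sumR_nonneg; intros; left; auto).
    apply sqrt_le_1_alt, hdelta, Hk. }
  pose proof (sqrt_sqrt delta Hdelta). pose proof (sqrt_pos delta). nra.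
Qed.

Theorem hardy_inequality (g : nat -> R) : g N = 0 ->
  sumR (fun j => m j * g j ^ 2) N
  <= 4 * delta * sumR (fun k => (g k - g (S k)) ^ 2 / w k) N.
Proof.
  intros HgN. set (D k := (g k - g (S k)) ^ 2 / w k).
  apply Rle_trans with
    (sumR (fun j => 2 * m j * sqrt_tail j * sumR_range (fun k => D k * sqrt_tail k) j N) N).
  { apply sumR_le. intros j Hj. pose proof (hm j).
    replace (2 * m j * sqrt_tail j * _) with
      (m j * (2 * sqrt_tail j * sumR_range (fun k => D k * sqrt_tail k) j N)) by ring.
    apply Rmult_le_compat_l; [lra|]. now apply sqr_le_sqrt_tail_mul_sumR_range. }
  rewrite sumR_abel, <- sumR_scal. apply sumR_le. intros k Hk.
  assert (HD : 0 <= D k).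
  { apply Rmult_le_pos; [apply pow2_ge_0|]. left; apply Rinv_0_lt_compat, hw. }
  rewrite (sumR_ext _ (fun j => 2 * (m j * sqrt_tail j))), sumR_scal by (intros; ring).
  pose proof (sqrt_tail_mul_sumR_m_sqrt_tail_le k Hk). nra.
Qed.

End Hardy.

(* the extremal test function of the Hardy inequality *)
Definition capped_tail (w : nat -> R) (n L j : nat) : R := sumR_range w (Nat.max j n) L.

Lemma capped_tail_end w n L j : (L <= j)%nat -> capped_tail w n L j = 0.
Proof. intros H. apply sumR_range_end. lia. Qed.

Lemma sumR_sqr_diff_capped_tail (w : nat -> R) n L : (forall k, w k <> 0) -> (n <= L)%nat ->
  sumR (fun k => (capped_tail w n L k - capped_tail w n L (S k)) ^ 2 / w k) L
  = sumR_range w n L.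
Proof.
  intros Hw HnL. unfold capped_tail.
  rewrite (sumR_drop_zeros _ n L) by (lia || (intros k Hk;
    rewrite !Nat.max_r by lia; unfold Rdiv; ring)).
  apply sumR_ext. intros t Ht.
  rewrite !Nat.max_l, (sumR_range_step w L (n + t)) by lia.
  field. apply Hw.
Qed.

Lemma sumR_mul_sqr_capped_tail_ge (m w : nat -> R) n L : (forall j, 0 <= m j) -> (n < L)%nat ->
  sumR m (S n) * sumR_range w n L ^ 2 <= sumR (fun j => m j * capped_tail w n L j ^ 2) L.
Proof.
  intros Hm HnL.
  pose proof (sumR_split (fun j => m j * capped_tail w n L j ^ 2) (S n) (L - S n)) as Hs.
  replace (S n + (L - S n))%nat with L in Hs by lia. rewrite Hs.
  assert (0 <= sumR (fun i => m (S n + i)%nat * capped_tail w n L (S n + i) ^ 2) (L - S n)).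
  { apply sumR_nonneg. intros. pose proof (Hm (S n + k)%nat).
    pose proof (pow2_ge_0 (capped_tail w n L (S n + k))). nra. }
  enough (sumR (fun j => m j * capped_tail w n L j ^ 2) (S n)
          = sumR m (S n) * sumR_range w n L ^ 2) by lra.
  rewrite Rmult_comm, <- sumR_scal. apply sumR_ext. intros j Hj.
  unfold capped_tail. rewrite Nat.max_r by lia. ring.
Qed.

Lemma ER_sup_is_lub (P : ER -> Prop) : (exists x, P x) -> ER_is_lub P (ER_sup P).
Proof.
  intros [x0 Hx0]. unfold ER_sup. apply epsilon_spec.
  destruct (classic (exists u, forall x, P x -> ER_le x (Fin u))) as [[u Hu]|Hno].
  - set (E r := P (Fin r)).
    assert (HE : exists r, E r).
    { destruct x0 as [r|]; [now exists r|]. specialize (Hu _ Hx0). contradiction. }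
    assert (Hb : bound E) by (exists u; intros r Hr; apply (Hu _ Hr)).
    destruct (completeness E Hb HE) as [l [Hl1 Hl2]].
    exists (Fin l). split.
    + intros [r|] Hr; [apply Hl1, Hr|]. specialize (Hu _ Hr). contradiction.
    + intros [v|] Hv; simpl; auto. apply Hl2. intros r Hr. apply (Hv _ Hr).
  - exists PInf. split.
    + intros [r|] _; simpl; auto.
    + intros [v|] Hv; simpl; auto. apply Hno. exists v. auto.
Qed.

Lemma R_inf_is_glb (P : R -> Prop) :
  (exists x, P x) -> (exists m, forall x, P x -> m <= x) -> R_is_glb P (R_inf P).
Proof.
  intros [x0 Hx0] [m Hm]. unfold R_inf. apply epsilon_spec.
  set (E y := P (- y)).
  assert (HE : exists y, E y) by (exists (- x0); unfold E; now rewrite Ropp_involutive).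
  assert (Hb : bound E) by (exists (- m); intros y Hy; apply Hm in Hy; lra).
  destruct (completeness E Hb HE) as [l [Hl1 Hl2]].
  exists (- l). split.
  - intros x Hx. assert (E (- x)) by (unfold E; now rewrite Ropp_involutive).
    apply Hl1 in H. lra.
  - intros m' Hm'. assert (l <= - m') by (apply Hl2; intros y Hy; apply Hm' in Hy; lra).
    lra.
Qed.

Lemma tail_sum_is_lub t n :
  ER_is_lub (fun x => exists N : nat, x = Fin (sumR (fun j => t (n + j)%nat) (S N)))
            (tail_sum t n).
Proof. apply ER_sup_is_lub. exists (Fin (sumR (fun j => t (n + j)%nat) 1)). now exists O. Qed.

Lemma ER_scale_tail_sum_le M t n d : 0 < M ->
  (forall N, M * sumR (fun j => t (n + j)%nat) (S N) <= d) ->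
  ER_le (ER_scale M (tail_sum t n)) (Fin d).
Proof.
  intros HM H.
  assert (Ht : ER_le (tail_sum t n) (Fin (d / M))).
  { apply tail_sum_is_lub. intros x [N ->]. simpl.
    apply (Rmult_le_reg_l M); auto. replace (M * (d / M)) with d by (field; lra). apply H. }
  destruct (tail_sum t n) as [u|]; [|contradiction]. simpl in *.
  replace d with (M * (d / M)) by (field; lra). apply Rmult_le_compat_l; lra.
Qed.

Lemma ER_scale_tail_sum_le_inv M t n d N : 0 <= M ->
  ER_le (ER_scale M (tail_sum t n)) (Fin d) ->
  M * sumR (fun j => t (n + j)%nat) (S N) <= d.
Proof.
  intros HM H. assert (Ht := proj1 (tail_sum_is_lub t n) _ (ex_intro _ N eq_refl)).
  destruct (tail_sum t n) as [u|]; [|contradiction]. simpl in *.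
  apply Rle_trans with (M * u); auto. apply Rmult_le_compat_l; auto.
Qed.

Lemma ER_inv_pos l : 0 < l -> ER_inv l = Fin (/ l).
Proof. intros Hl. unfold ER_inv. destruct (Req_EM_T l 0); [lra|auto]. Qed.

Section Paper.

Variables (a b c : nat -> R).
Hypotheses (hb : forall i, 0 < b i) (ha : forall i, (1 <= i)%nat -> 0 < a i)
  (hc : forall i, c i <= 0).

Lemma Fseq_stable i m j : (j <= m)%nat -> Fseq a b c i m j = Fseq a b c i j j.
Proof.
  induction m as [|m IH]; intros H.
  - now replace j with O by lia.
  - destruct (Nat.eq_dec j (S m)) as [->|Hne]; [reflexivity|].
    simpl. replace (Nat.leb j m) with true by (symmetry; apply Nat.leb_le; lia).
    apply IH; lia.
Qed.

Lemma Ft_lt i n : (n < i)%nat -> Ft a b c i n = 0.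
Proof.
  intros H. unfold Ft. now replace (Nat.ltb n i) with true by (symmetry; apply Nat.ltb_lt, H).
Qed.

Lemma Ft_diag i : Ft a b c i i = 1.
Proof. unfold Ft. now rewrite Nat.ltb_irrefl, Nat.sub_diag. Qed.

Lemma Ft_rec i n : (i < n)%nat ->
  b n * Ft a b c i n = sumR (fun k => qt a c n k * Ft a b c i k) n.
Proof.
  intros H. unfold Ft at 1. replace (Nat.ltb n i) with false by (symmetry; apply Nat.ltb_ge; lia).
  destruct (n - i)%nat as [|m] eqn:E; [lia|].
  cbn [Fseq]. replace (Nat.leb (S m) m) with false by (symmetry; apply Nat.leb_gt; lia).
  replace (i + S m)%nat with n by lia.
  rewrite (sumR_drop_zeros _ i n), E by (lia || (intros k Hk; rewrite Ft_lt by lia; ring)).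
  rewrite <- Rmult_assoc, Rinv_r, Rmult_1_l by (pose proof (hb n); lra).
  apply sumR_ext. intros t Ht.
  rewrite Fseq_stable by lia. unfold Ft.
  replace (Nat.ltb (i + t) i) with false by (symmetry; apply Nat.ltb_ge; lia).
  now replace (i + t - i)%nat with t by lia.
Qed.

Lemma qt_sum n (F : nat -> R) : (1 <= n)%nat ->
  sumR (fun k => qt a c n k * F k) n = - c n * sumR F n + a n * F (n - 1)%nat.
Proof.
  intros H. destruct n as [|n]; [lia|]. replace (S n - 1)%nat with n by lia.
  rewrite !sumR_S. unfold qt at 2. replace (S n - 1)%nat with n by lia. rewrite Nat.eqb_refl.
  rewrite (sumR_ext _ (fun k => - c (S n) * F k)), sumR_scal; [ring|].
  intros k Hk. unfold qt. replace (Nat.eqb k (S n - 1)) with false; [ring|].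
  symmetry. apply Nat.eqb_neq. lia.
Qed.

Lemma h_0 : h a b c 0 = 1.
Proof. unfold h. simpl. ring. Qed.

Lemma h_S n : h a b c (S n) = h a b c n - sumR (fun j => Ft a b c j n * c j / b j) (S n).
Proof. unfold h. rewrite (sumR_S (fun k => sumR _ (S k))). ring. Qed.

Lemma one_sub_h n :
  1 - h a b c n = sumR (fun j => sumR (Ft a b c j) n * (c j / b j)) n.
Proof.
  transitivity (sumR (fun j => sumR (fun k => Ft a b c j k * c j / b j) n) n).
  - unfold h. rewrite sumR_swap. ring_simplify. apply sumR_ext. intros k Hk.
    symmetry. apply sumR_truncate; [lia|]. intros j Hj. rewrite Ft_lt by lia. unfold Rdiv. ring.
  - apply sumR_ext. intros j _. rewrite Rmult_comm, <- sumR_scal.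
    apply sumR_ext. intros. unfold Rdiv. ring.
Qed.

Lemma b_mul_sumR_Ft n : (1 <= n)%nat ->
  b n * sumR (fun j => Ft a b c j n * c j / b j) n
  = - c n * (1 - h a b c n) + a n * (h a b c (n - 1) - h a b c n).
Proof.
  intros Hn.
  assert (Hpred : h a b c (n - 1) - h a b c n
                  = sumR (fun j => Ft a b c j (n - 1) * (c j / b j)) n).
  { destruct n as [|n]; [lia|]. replace (S n - 1)%nat with n by lia. rewrite h_S.
    ring_simplify. apply sumR_ext. intros. unfold Rdiv. ring. }
  rewrite one_sub_h, Hpred, <- !sumR_scal, <- sumR_plus. apply sumR_ext. intros j Hj.
  replace (b n * (Ft a b c j n * c j / b j)) with (b n * Ft a b c j n * (c j / b j))
    by (unfold Rdiv; ring).
  rewrite Ft_rec, qt_sum by lia. ring.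
Qed.

Lemma h_harmonic n : (1 <= n)%nat ->
  b n * (h a b c (S n) - h a b c n) = a n * (h a b c n - h a b c (n - 1)) - c n * h a b c n.
Proof.
  intros Hn. rewrite h_S, sumR_S, Ft_diag.
  replace (b n * (h a b c n - (sumR (fun j => Ft a b c j n * c j / b j) n + 1 * c n / b n)
    - h a b c n)) with (- (b n * sumR (fun j => Ft a b c j n * c j / b j) n) - c n)
    by (field; pose proof (hb n); lra).
  rewrite b_mul_sumR_Ft by auto. ring.
Qed.

Lemma mu_pos k : 0 < mu a b k.
Proof.
  induction k as [|k IH]; simpl; [lra|].
  apply Rmult_lt_0_compat, Rdiv_lt_0_compat; auto. apply ha. lia.
Qed.

Lemma mu_S_mul_a k : mu a b (S k) * a (S k) = mu a b k * b k.
Proof. simpl. assert (0 < a (S k)) by (apply ha; lia). field. lra. Qed.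

Definition flux (N : nat) : R := - sumR (fun j => mu a b j * c j * h a b c j) N.

Lemma flux_eq k : mu a b k * b k * (h a b c (S k) - h a b c k) = flux (S k).
Proof.
  induction k as [|k IH].
  - unfold flux. rewrite h_S. simpl. rewrite Ft_diag, h_0. pose proof (hb 0%nat). field. lra.
  - replace (mu a b (S k) * b (S k) * (h a b c (S (S k)) - h a b c (S k)))
      with (mu a b (S k) * (b (S k) * (h a b c (S (S k)) - h a b c (S k)))) by ring.
    rewrite h_harmonic by lia. replace (S k - 1)%nat with k by lia.
    transitivity (mu a b (S k) * a (S k) * (h a b c (S k) - h a b c k)
                  - mu a b (S k) * c (S k) * h a b c (S k)); [ring|].
    rewrite mu_S_mul_a, IH. unfold flux. rewrite (sumR_S _ (S k)). ring.
Qed.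

Lemma h_ge1_flux_nonneg k : 1 <= h a b c k /\ 0 <= flux k.
Proof.
  induction k as [|k [Hh Hf]].
  - rewrite h_0. unfold flux. simpl. lra.
  - assert (Hf' : 0 <= flux (S k)).
    { unfold flux in *. rewrite sumR_S. pose proof (mu_pos k). pose proof (hc k).
      assert (0 <= mu a b k * - c k * h a b c k)
        by (apply Rmult_le_pos; [apply Rmult_le_pos|]; lra).
      lra. }
    split; auto. pose proof (flux_eq k). pose proof (mu_pos k). pose proof (hb k).
    assert (0 <= h a b c (S k) - h a b c k).
    { apply (Rmult_le_reg_l (mu a b k * b k)); [apply Rmult_lt_0_compat; auto|lra]. }
    lra.
Qed.

Lemma h_ge1 k : 1 <= h a b c k.
Proof. apply h_ge1_flux_nonneg. Qed.

Definition dirichlet_sum (f : nat -> R) (N : nat) : R :=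
  sumR (fun k => mu a b k * (b k * (f (S k) - f k) ^ 2 - c k * f k ^ 2)) N.

Definition l2_sum (f : nat -> R) (N : nat) : R := sumR (fun k => mu a b k * f k ^ 2) N.

(* speed measure and edge resistances of the h-transformed chain *)
Definition htr_measure (j : nat) : R := mu a b j * h a b c j ^ 2.
Definition htr_resistance (k : nat) : R := / (h a b c k * h a b c (S k) * mu a b k * b k).

Lemma htr_measure_pos j : 0 < htr_measure j.
Proof. apply Rmult_lt_0_compat; [apply mu_pos|]. pose proof (h_ge1 j). apply pow_lt. lra. Qed.

Lemma htr_resistance_pos k : 0 < htr_resistance k.
Proof.
  pose proof (h_ge1 k). pose proof (h_ge1 (S k)). pose proof (mu_pos k). pose proof (hb k).
  apply Rinv_0_lt_compat. repeat apply Rmult_lt_0_compat; lra.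
Qed.

Lemma dirichlet_sum_htransform g N :
  dirichlet_sum (fun k => h a b c k * g k) N
  = sumR (fun k => mu a b k * b k * h a b c k * h a b c (S k) * (g (S k) - g k) ^ 2) N
    + flux N * h a b c N * g N ^ 2.
Proof.
  induction N as [|N IH]; [unfold dirichlet_sum, flux; simpl; ring|].
  unfold dirichlet_sum in *. rewrite !sumR_S, IH.
  assert (E : flux N = flux (S N) + mu a b N * c N * h a b c N)
    by (unfold flux; rewrite sumR_S; ring).
  rewrite E, <- flux_eq. ring.
Qed.

Lemma dirichlet_sum_htransform_supp g N : g N = 0 ->
  dirichlet_sum (fun k => h a b c k * g k) N
  = sumR (fun k => (g k - g (S k)) ^ 2 / htr_resistance k) N.
Proof.
  intros HgN. rewrite dirichlet_sum_htransform, HgN. ring_simplify.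
  apply sumR_ext. intros k _. unfold htr_resistance, Rdiv. rewrite Rinv_inv. ring.
Qed.

Lemma l2_sum_htransform g N :
  l2_sum (fun k => h a b c k * g k) N = sumR (fun j => htr_measure j * g j ^ 2) N.
Proof. apply sumR_ext. intros. unfold htr_measure. ring. Qed.

Lemma dirichlet_sum_nonneg f N : 0 <= dirichlet_sum f N.
Proof.
  apply sumR_nonneg. intros k _.
  pose proof (mu_pos k). pose proof (hb k). pose proof (hc k).
  pose proof (pow2_ge_0 (f (S k) - f k)). pose proof (pow2_ge_0 (f k)).
  apply Rmult_le_pos; [lra|]. nra.
Qed.

Lemma lambda0_is_glb : R_is_glb (Dvalues a b c) (lambda0 a b c).
Proof.
  apply R_inf_is_glb.
  - set (f k := if Nat.eqb k 0 then 1 else 0).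
    exists (dirichlet_sum f 1), f, 1%nat. repeat split.
    + intros k Hk. destruct k; [lia|reflexivity].
    + simpl. unfold f. simpl. ring.
  - exists 0. intros x [f [N [_ [_ ->]]]]. apply dirichlet_sum_nonneg.
Qed.

Lemma lambda0_nonneg : 0 <= lambda0 a b c.
Proof.
  apply lambda0_is_glb. intros x [f [N [_ [_ ->]]]]. apply dirichlet_sum_nonneg.
Qed.

Lemma lambda0_rayleigh f N : (forall k, (N <= k)%nat -> f k = 0) ->
  lambda0 a b c * l2_sum f N <= dirichlet_sum f N.
Proof.
  intros Hf. set (Z := l2_sum f N).
  assert (HZ : 0 <= Z).
  { apply sumR_nonneg. intros k _. pose proof (mu_pos k). pose proof (pow2_ge_0 (f k)). nra. }
  destruct (Req_dec Z 0) as [HZ0|HZ0].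
  { rewrite HZ0, Rmult_0_r. apply dirichlet_sum_nonneg. }
  set (r := / sqrt Z).
  assert (Hr : r * r = / Z)
    by (unfold r; rewrite <- Rinv_mult, sqrt_sqrt; auto).
  assert (Hx : Dvalues a b c (r * r * dirichlet_sum f N)).
  { exists (fun k => r * f k), N. repeat split.
    - intros k Hk. rewrite Hf by auto. ring.
    - transitivity (r * r * Z); [|rewrite Hr; field; auto].
      unfold Z, l2_sum. rewrite <- sumR_scal. apply sumR_ext. intros. ring.
    - unfold dirichlet_sum. rewrite <- sumR_scal. apply sumR_ext. intros. ring. }
  apply (proj1 lambda0_is_glb) in Hx. rewrite Hr in Hx.
  apply (Rmult_le_reg_l (/ Z)); [apply Rinv_0_lt_compat; lra|].
  replace (/ Z * (lambda0 a b c * Z)) with (lambda0 a b c) by (field; auto). lra.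
Qed.

Lemma lambda0_htr_hardy g N : (forall k, (N <= k)%nat -> g k = 0) ->
  lambda0 a b c * sumR (fun j => htr_measure j * g j ^ 2) N
  <= sumR (fun k => (g k - g (S k)) ^ 2 / htr_resistance k) N.
Proof.
  intros Hg. rewrite <- l2_sum_htransform, <- dirichlet_sum_htransform_supp by auto.
  apply lambda0_rayleigh. intros k Hk. rewrite Hg by auto. ring.
Qed.

Lemma htr_measure_sum_pos n : 0 < sumR htr_measure (S n).
Proof.
  rewrite sumR_S. pose proof (htr_measure_pos n).
  assert (0 <= sumR htr_measure n) by (apply sumR_nonneg; intros; left; apply htr_measure_pos).
  lra.
Qed.

Lemma htr_mass_tail_le_inv_lambda0 n L : 0 < lambda0 a b c -> (n < L)%nat ->
  sumR htr_measure (S n) * sumR_range htr_resistance n L <= / lambda0 a b c.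
Proof.
  intros Hl HnL.
  assert (Hray := lambda0_htr_hardy (capped_tail htr_resistance n L) L
                    (capped_tail_end htr_resistance n L)).
  rewrite sumR_sqr_diff_capped_tail in Hray
    by (lia || (intros k; pose proof (htr_resistance_pos k); lra)).
  pose proof (sumR_mul_sqr_capped_tail_ge htr_measure htr_resistance n L
                (fun j => Rlt_le _ _ (htr_measure_pos j)) HnL).
  set (T := sumR_range htr_resistance n L) in *. set (M := sumR htr_measure (S n)) in *.
  assert (HT : 0 < T).
  { unfold T. rewrite sumR_range_step by auto. pose proof (htr_resistance_pos n).
    assert (0 <= sumR_range htr_resistance (S n) L)
      by (apply sumR_range_nonneg; intros; left; apply htr_resistance_pos). lra. }
  assert (HM : 0 < M) by apply htr_measure_sum_pos.
  assert (lambda0 a b c * (M * T) * T <= T).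
  { replace (lambda0 a b c * (M * T) * T) with (lambda0 a b c * (M * T ^ 2)) by ring.
    apply Rle_trans with (2 := Hray). apply Rmult_le_compat_l; lra. }
  assert (lambda0 a b c * (M * T) <= 1) by (apply Rmult_le_reg_r with T; lra).
  apply (Rmult_le_reg_l (lambda0 a b c)); auto. rewrite Rinv_r by lra. lra.
Qed.

Lemma lambda0_ge_inv_4delta d :
  (forall n L, (n < L)%nat -> sumR htr_measure (S n) * sumR_range htr_resistance n L <= d) ->
  forall x, Dvalues a b c x -> 1 <= 4 * d * x.
Proof.
  intros Hd x [f [N [Hsupp [Hnorm ->]]]].
  set (g k := f k / h a b c k).
  assert (Hhg : forall k, h a b c k * g k = f k)
    by (intros k; unfold g; pose proof (h_ge1 k); field; lra).
  assert (Hdir : dirichlet_sum f N = dirichlet_sum (fun k => h a b c k * g k) N)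
    by (apply sumR_ext; intros; now rewrite !Hhg).
  assert (Hl2 : l2_sum f N = l2_sum (fun k => h a b c k * g k) N)
    by (apply sumR_ext; intros; now rewrite !Hhg).
  change (1 <= 4 * d * dirichlet_sum f N).
  rewrite Hdir, dirichlet_sum_htransform_supp
    by (unfold g; rewrite Hsupp by lia; unfold Rdiv; ring).
  change (l2_sum f N = 1) in Hnorm.
  rewrite <- Hnorm, Hl2, l2_sum_htransform.
  apply hardy_inequality.
  - apply htr_measure_pos.
  - apply htr_resistance_pos.
  - intros n Hn. apply Hd, Hn.
  - unfold g. rewrite Hsupp by lia. unfold Rdiv. ring.
Qed.

Lemma Sdelta_htr n :
  Sdelta a b c n = ER_scale (sumR htr_measure (S n)) (tail_sum htr_resistance n).
Proof. reflexivity. Qed.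

Lemma delta_tilde_is_lub :
  ER_is_lub (fun x => exists n, x = Sdelta a b c n) (delta_tilde a b c).
Proof. apply ER_sup_is_lub. exists (Sdelta a b c 0). now exists O. Qed.

Lemma delta_tilde_le_inv_lambda0 : 0 < lambda0 a b c ->
  ER_le (delta_tilde a b c) (Fin (/ lambda0 a b c)).
Proof.
  intros Hl. apply delta_tilde_is_lub. intros x [n ->]. rewrite Sdelta_htr.
  apply ER_scale_tail_sum_le; [apply htr_measure_sum_pos|]. intros N.
  rewrite <- sumR_range_shift. apply htr_mass_tail_le_inv_lambda0; auto. lia.
Qed.

Lemma inv_4delta_le_lambda0 d : delta_tilde a b c = Fin d ->
  0 < d /\ / (4 * d) <= lambda0 a b c.
Proof.
  intros Hd.
  assert (Hbound : forall n L, (n < L)%nat ->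
    sumR htr_measure (S n) * sumR_range htr_resistance n L <= d).
  { intros n L HnL.
    replace L with (n + S (L - S n))%nat by lia. rewrite sumR_range_shift.
    apply (ER_scale_tail_sum_le_inv _ htr_resistance n d (L - S n));
      [left; apply htr_measure_sum_pos|].
    rewrite <- Sdelta_htr, <- Hd. apply delta_tilde_is_lub. now exists n. }
  assert (Hdpos : 0 < d).
  { eapply Rlt_le_trans; [|apply (Hbound 0%nat 1%nat); lia].
    apply Rmult_lt_0_compat; [apply htr_measure_sum_pos|].
    rewrite sumR_range_step by lia. rewrite sumR_range_end by lia.
    pose proof (htr_resistance_pos 0). lra. }
  split; auto. apply lambda0_is_glb. intros x Hx.
  pose proof (lambda0_ge_inv_4delta d Hbound x Hx).
  apply (Rmult_le_reg_l (4 * d)); [lra|]. rewrite Rinv_r by lra. lra.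
Qed.

End Paper.

Theorem theorem2p6 (a b c : nat -> R)
  (hb : forall i : nat, 0 < b i)
  (ha : forall i : nat, (1 <= i)%nat -> 0 < a i)
  (hc : forall i : nat, c i <= 0) :
  ER_le (delta_tilde a b c) (ER_inv (lambda0 a b c)) /\
  ER_le (ER_inv (lambda0 a b c)) (ER_scale 4 (delta_tilde a b c)) /\
  (0 < lambda0 a b c <-> delta_tilde a b c <> PInf).
Proof.
  pose proof (lambda0_nonneg a b c hb ha hc) as Hl0.
  pose proof (delta_tilde_le_inv_lambda0 a b c hb ha hc) as Hupper.
  pose proof (inv_4delta_le_lambda0 a b c hb ha hc) as Hlower.
  split; [|split].
  - destruct (Req_EM_T (lambda0 a b c) 0) as [E|E].
    + unfold ER_inv. rewrite E. destruct (Req_EM_T 0 0); [|lra].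
      now destruct (delta_tilde a b c).
    + rewrite ER_inv_pos by lra. apply Hupper. lra.
  - destruct (delta_tilde a b c) as [d|]; [|now destruct (ER_inv _)].
    destruct (Hlower d eq_refl) as [Hd Hle].
    assert (0 < / (4 * d)) by (apply Rinv_0_lt_compat; lra).
    rewrite ER_inv_pos by lra. simpl.
    replace (4 * d) with (/ / (4 * d)) by (field; lra). apply Rinv_le_contravar; lra.
  - split.
    + intros Hl E. specialize (Hupper Hl). now rewrite E in Hupper.
    + intros Hne. destruct (delta_tilde a b c) as [d|]; [|congruence].
      destruct (Hlower d eq_refl) as [Hd Hle].
      assert (0 < / (4 * d)) by (apply Rinv_0_lt_compat; lra). lra.
Qed.
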